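(* Let $l\geq 2$ be an integer and let $n=\binom{2l+1}{l}+1$. Then $\chi'_2(\overleftrightarrow{K_n})<\chi'_{1,2}(\overleftrightarrow{K_n})$.
   Context: For a simple graph $G$, the symmetric digraph $\overleftrightarrow{G}$ is obtained by replacing each edge $uv$ of $G$ by the pair of opposite arcs $\overrightarrow{uv}$ and $\overrightarrow{vu}$; $K_n$ is the complete graph on $n$ vertices. A monochromatic 2-path is a pair of arcs $\overrightarrow{uv},\overrightarrow{vw}$ with $w\neq u$ of the same colour; a monochromatic 2-cycle is a pair $\overrightarrow{uv},\overrightarrow{vu}$ of the same colour. $\chi'_{1,2}(\overleftrightarrow{G})$ is the least number of colours in an arc-colouring of $\overleftrightarrow{G}$ with no monochromatic 2-cycles and no monochromatic 2-paths; $\chi'_{2}(\overleftrightarrow{G})$ is the least number of colours in an arc-colouring with no monochromatic 2-paths. *)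

From mathcomp Require Import all_boot.
Set Implicit Arguments. Unset Strict Implicit. Unset Printing Implicit Defensive.

(* An arc-colouring of <->K_n with k colours: a colour c (u,v) : 'I_k for each
   ordered pair (u,v); only pairs with u != v (the arcs) are relevant. *)
Definition arc_colouring (n k : nat) := {ffun 'I_n * 'I_n -> 'I_k}.

Definition no_mono_2path n k (c : arc_colouring n k) : bool :=
  [forall u : 'I_n, forall v : 'I_n, forall w : 'I_n,
     [&& u != v, v != w & w != u] ==> (c (u, v) != c (v, w))].

Definition no_mono_2cycle n k (c : arc_colouring n k) : bool :=
  [forall u : 'I_n, forall v : 'I_n, (u != v) ==> (c (u, v) != c (v, u))].

Definition col2 n k : bool := [exists c : arc_colouring n k, no_mono_2path c].
Definition col12 n k : bool :=
  [exists c : arc_colouring n k, no_mono_2path c && no_mono_2cycle c].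

Lemma col12_ex n : exists k, col12 n k.
Proof.
exists #|{: 'I_n * 'I_n}|; apply/existsP.
exists [ffun p => enum_rank p]; apply/andP; split.
- apply/forallP => u; apply/forallP => v; apply/forallP => w; apply/implyP.
  case/and3P => uv _ _; rewrite !ffunE; apply: contra uv.
  by move/eqP/enum_rank_inj => [-> _].
- apply/forallP => u; apply/forallP => v; apply/implyP => uv; rewrite !ffunE.
  by apply: contra uv => /eqP/enum_rank_inj [-> _].
Qed.

Lemma col2_ex n : exists k, col2 n k.
Proof.
case: (col12_ex n) => k /existsP [c /andP [h _]].
by exists k; apply/existsP; exists c.
Qed.

Definition chi2_Kn n : nat := ex_minn (col2_ex n).
Definition chi12_Kn n : nat := ex_minn (col12_ex n).

(* Upper bound: label the vertices by l-subsets of {0, ..., 2l-1}, each subset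
   used at most twice, which is possible since n <= 2 C(2l, l).  Colour the arc
   uv by an element of f(u) \ f(v), or by one extra colour when f(u) = f(v).  A
   monochromatic 2-path u v w would need either three vertices with one label,
   or a colour lying both outside f(v) and inside f(v).  Hence chi'_2 <= 2l + 1.

   Lower bound: without monochromatic 2-paths and 2-cycles, the colour of uv
   never leaves v, so the sets of colours leaving the n vertices form an
   antichain of subsets of the k colours.  Sperner's theorem (via the LYM
   inequality) gives n <= C(k, k/2), which fails for k <= 2l + 1. *)

From mathcomp Require Import all_boot zify.
Set Implicit Arguments. Unset Strict Implicit. Unset Printing Implicit Defensive.

Lemma leq_bin_succ m k : k < m - k -> 'C(m, k) <= 'C(m, k.+1).
Proof.
by move=> lt_k; rewrite -(@leq_pmul2l k.+1) // mul_bin_left leq_mul2r lt_k orbT.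
Qed.

Lemma leq_bin_below_mid m k1 k2 : k1 <= k2 <= m./2 -> 'C(m, k1) <= 'C(m, k2).
Proof.
case/andP; elim: k2 => [|k2 IH]; first by rewrite leqn0 => /eqP ->.
rewrite leq_eqVlt => /predU1P [-> // | lt_k12].
rewrite geq_half_double => le_k2m.
apply: leq_trans (IH lt_k12 _) (leq_bin_succ _); rewrite ?geq_half_double; lia.
Qed.

Lemma bin_max_mid m k : 'C(m, k) <= 'C(m, m./2).
Proof.
have [le_k_half | lt_half_k] := leqP k m./2.
  by apply: leq_bin_below_mid; rewrite le_k_half leqnn.
have [le_km | lt_mk] := leqP k m; last by rewrite bin_small.
rewrite -(bin_sub le_km) leq_bin_below_mid //.
by rewrite leqnn geq_half_double; rewrite ltn_half_double in lt_half_k; lia.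
Qed.

Lemma leq_bin_mid k1 k2 : k1 <= k2 -> 'C(k1, k1./2) <= 'C(k2, k2./2).
Proof.
apply: (@homo_leq _ (fun k => 'C(k, k./2)) leq leqnn
          (fun _ _ _ => @leq_trans _ _ _)) => k.
rewrite /= uphalf_half; case: (odd k) => /=.
- by rewrite add1n binS leq_addl.
- exact: leq_bin2l.
Qed.

Lemma half_mul2n_add1 l : (2 * l + 1)./2 = l.
Proof. by rewrite addn1 mul2n -[(l.*2).+1]/(true + l.*2) half_bit_double. Qed.

Lemma ltn_bin_odd_mid l : 'C(2 * l + 1, l) < 2 * 'C(2 * l, l).
Proof.
case: l => [//|l]; rewrite addn1 binS [2 * 'C(_, _)]mul2n -addnn ltn_add2l.
rewrite -(@ltn_pmul2l l.+1) // mul_bin_left ltn_mul2r bin_gt0; lia.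
Qed.

Definition antichain (T : finType) (F : {set {set T}}) :=
  {in F &, forall A B : {set T}, A \subset B -> A = B}.

Section LubellYamamotoMeshalkin.
Variable T : finType.

(* The number of maximal chains of [X] passing through [A]. *)
Definition lym_weight (X A : {set T}) := #|A|`! * (#|X| - #|A|)`!.

Lemma lym_weight_split (X A : {set T}) : A \proper X ->
  lym_weight X A = \sum_(x in X :\: A) lym_weight (X :\ x) A.
Proof.
move=> ltAX; have ltc := proper_card ltAX.
rewrite (eq_bigr (fun _ => #|A|`! * (#|X|.-1 - #|A|)`!)); last first.
  by move=> x /setDP [xX _]; rewrite /lym_weight (cardsD1 x X) xX.
rewrite sum_nat_const cardsDS ?proper_sub // /lym_weight -predn_sub.
by rewrite -{1}(@prednK (#|X| - #|A|)) ?subn_gt0 // factS mulnCA prednK ?subn_gt0.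
Qed.

Variable F : {set {set T}}.
Hypothesis antiF : antichain F.

Lemma lym_inequality (X : {set T}) :
  \sum_(A in F | A \subset X) lym_weight X A <= #|X|`!.
Proof.
have [k] := ubnP #|X|; elim: k X => // k IH X /ltnSE le_Xk.
have [XF | XnF] := boolP (X \in F).
  rewrite (bigD1 X) /= ?XF ?subxx // big1 ?addn0; last first.
    by move=> A /andP [/andP [AF AX] /eqP []]; exact: antiF.
  by rewrite /lym_weight subnn fact0 muln1.
have proper_X A : A \in F -> A \subset X -> A \proper X.
  by move=> AF AX; rewrite properEneq AX andbT; apply: contraNneq XnF => <-.
rewrite (eq_bigr (fun A => \sum_(x in X :\: A) lym_weight (X :\ x) A)); last first.
  by move=> A /andP [AF AX]; apply/lym_weight_split/proper_X.
rewrite (exchange_big_dep (mem X)) /=; last by move=> A x _ /setDP [].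
apply: (@leq_trans (\sum_(x in X) #|X|.-1`!)).
  apply: leq_sum => x xX.
  have cXx : #|X| = #|X :\ x|.+1 by rewrite (cardsD1 x X) xX.
  rewrite cXx /=; apply: leq_trans (IH _ _); last by lia.
  by apply/eq_leq/eq_bigl => A; rewrite subsetD1 in_setD xX andbT andbA.
by rewrite sum_nat_const; case: #|X| => // m; rewrite factS.
Qed.

Lemma sperner : #|F| <= 'C(#|T|, #|T|./2).
Proof.
set m := #|T|; set h := m./2; set w := h`! * (m - h)`!.
have cT : #|[set: T]| = m by rewrite cardsT.
have Cw : 'C(m, h) * w = m`! by rewrite bin_fact // /h -{2}(odd_double_half m); lia.
have w_le A : w <= lym_weight [set: T] A.
  have le_Am : #|A| <= m by rewrite -cT subset_leq_card ?subsetT.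
  rewrite -(@leq_pmul2l 'C(m, #|A|)) ?bin_gt0 // /lym_weight cT bin_fact // -Cw.
  by rewrite leq_mul2r bin_max_mid orbT.
rewrite -(@leq_pmul2r w) ?muln_gt0 ?fact_gt0 // Cw -cT -sum_nat_const.
apply: leq_trans (lym_inequality _); rewrite big_mkcondr /=.
by apply: leq_sum => A AF; rewrite subsetT w_le.
Qed.

End LubellYamamotoMeshalkin.

Section LabelColouring.
Variables (n m j : nat) (f : 'I_n -> {set 'I_m}).
Hypothesis card_f : forall u, #|f u| = j.
Hypothesis f_at_most_two_to_one :
  forall u v w, f u = f v -> f v = f w -> [|| u == v, v == w | w == u].

Definition label_colouring : arc_colouring n m.+1 :=
  [ffun p => if [pick x in f p.1 :\: f p.2] is Some x
             then widen_ord (leqnSn m) x else ord_max].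

Lemma label_colouringP u v :
  label_colouring (u, v) = ord_max /\ f u = f v \/
  exists2 x, x \in f u :\: f v & label_colouring (u, v) = widen_ord (leqnSn m) x.
Proof.
rewrite ffunE /=; case: pickP => [x xP | none]; first by right; exists x.
left; split=> //; apply/eqP; rewrite eqEcard !card_f leqnn andbT.
by rewrite -setD_eq0; apply/eqP/setP => x; rewrite none inE.
Qed.

Lemma label_colouring_no_mono_2path : no_mono_2path label_colouring.
Proof.
apply/forallP => u; apply/forallP => v; apply/forallP => w; apply/implyP.
case/and3P=> uv vw wu; apply/eqP.
have neq_max x : widen_ord (leqnSn m) x != ord_max.
  by rewrite -val_eqE /= neq_ltn ltn_ord.
case: (label_colouringP u v) => [[-> fuv] | [x /setDP [_ xnv] ->]];
  case: (label_colouringP v w) => [[-> fvw] | [y /setDP [yv _] ->]].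
- by move: (f_at_most_two_to_one fuv fvw); rewrite (negPf uv) (negPf vw) (negPf wu).
- by move/esym/eqP; rewrite (negPf (neq_max y)).
- by move/eqP; rewrite (negPf (neq_max x)).
- by move/(congr1 val) => /= /ord_inj xy; rewrite xy yv in xnv.
Qed.

End LabelColouring.

Lemma col2_of_bin m j n : n <= 2 * 'C(m, j) -> col2 n m.+1.
Proof.
move=> le_n; set L := enum [set A : {set 'I_m} | #|A| == j].
have size_L : size L = 'C(m, j) by rewrite -cardE card_draws card_ord.
have half_lt (u : 'I_n) : u %/ 2 < size L.
  by rewrite size_L ltn_divLR //; have := ltn_ord u; lia.
pose f (u : 'I_n) := nth set0 L (u %/ 2).
have card_f u : #|f u| = j.
  by have := mem_nth set0 (half_lt u); rewrite mem_enum inE => /eqP.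
apply/existsP; exists (label_colouring f); apply: label_colouring_no_mono_2path card_f _.
move=> u v w /eqP fuv /eqP fvw.
move: fuv fvw; rewrite !nth_uniq ?enum_uniq // => /eqP huv /eqP hvw.
by rewrite -!val_eqE /=; lia.
Qed.

Lemma col12_le_bin_mid n k : col12 n k -> n <= 'C(k, k./2).
Proof.
case/existsP=> c /andP [/forallP no_path /forallP no_cycle].
pose out (v : 'I_n) := [set c (v, w) | w in [set w | w != v]].
have out_not_sub u v : u != v -> ~~ (out u \subset out v).
  move=> uv; apply/subsetPn; exists (c (u, v)).
    by apply/imsetP; exists v; rewrite // inE eq_sym.
  apply/negP => /imsetP [w]; rewrite inE => wv cuv.
  have [wu | wu] := eqVneq w u.
    by move: (no_cycle u) => /forallP /(_ v); rewrite uv cuv wu eqxx.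
  move: (no_path u) => /forallP /(_ v) /forallP /(_ w).
  by rewrite uv eq_sym wv wu -cuv eqxx.
have out_inj : injective out.
  move=> u v out_uv; apply/eqP/negPn/negP => uv.
  by move: (out_not_sub u v uv); rewrite out_uv subxx.
have anti : antichain (out @: setT).
  move=> _ _ /imsetP [u _ ->] /imsetP [v _ ->] sub.
  by have [-> // | uv] := eqVneq u v; move: (out_not_sub u v uv); rewrite sub.
by have := sperner anti; rewrite card_imset // cardsT !card_ord.
Qed.

Lemma chi2_Kn_min n k : col2 n k -> chi2_Kn n <= k.
Proof. by rewrite /chi2_Kn; case: ex_minnP => k0 _; apply. Qed.

Lemma col12_chi12_Kn n : col12 n (chi12_Kn n).
Proof. by rewrite /chi12_Kn; case: ex_minnP. Qed.

Theorem proposition4p2 (l : nat) (hl : 2 <= l) :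
  let n := 'C(2 * l + 1, l) + 1 in chi2_Kn n < chi12_Kn n.
Proof.
cbv zeta; set n := 'C(2 * l + 1, l) + 1.
have chi2_le : chi2_Kn n <= 2 * l + 1.
  apply/chi2_Kn_min; rewrite addn1; apply: col2_of_bin.
  by rewrite /n addn1; exact: ltn_bin_odd_mid.
apply: leq_ltn_trans chi2_le _; rewrite ltnNge; apply/negP => le_chi12.
have := col12_le_bin_mid (col12_chi12_Kn n).
apply/negP; rewrite -ltnNge; apply: leq_ltn_trans (leq_bin_mid le_chi12) _.
by rewrite half_mul2n_add1 /n; lia.
Qed.
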